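(* Let $T$ be a continuous monad on $\mathsf{Set}$, let $X,Y$ be sets, $\Gamma\in T([n])$, $\Delta\in T([m])$, $x:[n]\to X$, $y:[m]\to X$. (1) If $T(x)(\Gamma)\sqsubseteq T(y)(\Delta)$ in $T(X)$ and $f:X\to T(Y)$, then $\Gamma\mathrel{>\!\!>=}(i\mapsto f(x_i))\sqsubseteq\Delta\mathrel{>\!\!>=}(j\mapsto f(y_j))$. (2) If $f,g:X\to T(Y)$ satisfy $f\sqsubseteq g$ pointwise, then $\Gamma\mathrel{>\!\!>=}(i\mapsto f(x_i))\sqsubseteq\Gamma\mathrel{>\!\!>=}(i\mapsto g(x_i))$.
   Context: $[n]=\{1,\dots,n\}$ for $n\in\mathbb{N}$, $[\omega]=\mathbb{N}$, and $n,m\in\mathbb{N}\cup\{\omega\}$; $x_i$ denotes $x(i)$. For $\mu\in T(X)$ and $f:X\to T(Y)$, $\mu\mathrel{>\!\!>=} f$ is the Kleisli extension of $f$ applied to $\mu$. $T$ is continuous if every $T(X)$ carries an $\omega$-cppo structure $\sqsubseteq$ such that $\mathrel{>\!\!>=}$ is continuous in both arguments (functions $X\to T(Y)$ ordered pointwise). *)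

(* Monads on Set are modelled as monads on Rocq's Type. *)
From Stdlib Require Import Arith.

(* Index sets [n] for n in N u {omega}. [n] = {1..n} is represented by
   the n-element type {i : nat | i < n} (0-based; the shift is immaterial),
   and [omega] = N by nat. *)
Inductive natw : Type := fin (n : nat) | omega.

Definition idx (n : natw) : Type :=
  match n with
  | fin k => {i : nat | i < k}
  | omega => nat
  end.

Record monad : Type := Monad {
  T : Type -> Type;
  ret : forall X : Type, X -> T X;
  bind : forall X Y : Type, T X -> (X -> T Y) -> T Y;
  bind_ret_l : forall (X Y : Type) (a : X) (f : X -> T Y), bind X Y (ret X a) f = f a;
  bind_ret_r : forall (X : Type) (mu : T X), bind X X mu (ret X) = mu;
  bind_assoc : forall (X Y Z : Type) (mu : T X) (f : X -> T Y) (g : Y -> T Z),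
      bind Y Z (bind X Y mu f) g = bind X Z mu (fun a => bind Y Z (f a) g)
}.
Arguments ret {m X} _.
Arguments bind {m X Y} _ _.

Definition fmap {M : monad} {X Y : Type} (h : X -> Y) (mu : T M X) : T M Y :=
  bind mu (fun a => ret (h a)).

Definition is_chain {A : Type} (le : A -> A -> Prop) (c : nat -> A) : Prop :=
  forall k, le (c k) (c (S k)).

Definition is_lub {A : Type} (le : A -> A -> Prop) (c : nat -> A) (l : A) : Prop :=
  (forall k, le (c k) l) /\ (forall u, (forall k, le (c k) u) -> le l u).

Definition is_wcppo {A : Type} (le : A -> A -> Prop) : Prop :=
  (forall a, le a a) /\
  (forall a b c, le a b -> le b c -> le a c) /\
  (forall a b, le a b -> le b a -> a = b) /\
  (exists bot, forall a, le bot a) /\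
  (forall c, is_chain le c -> exists l, is_lub le c l).

Record continuous_monad : Type := ContinuousMonad {
  cm :> monad;
  le : forall X : Type, T cm X -> T cm X -> Prop;
  le_wcppo : forall X : Type, is_wcppo (le X);
  bind_mono_l : forall (X Y : Type) (mu nu : T cm X) (f : X -> T cm Y),
      le X mu nu -> le Y (bind mu f) (bind nu f);
  bind_mono_r : forall (X Y : Type) (mu : T cm X) (f g : X -> T cm Y),
      (forall a, le Y (f a) (g a)) -> le Y (bind mu f) (bind mu g);
  bind_cont_l : forall (X Y : Type) (c : nat -> T cm X) (l : T cm X) (f : X -> T cm Y),
      is_chain (le X) c -> is_lub (le X) c l ->
      is_lub (le Y) (fun k => bind (c k) f) (bind l f);
  bind_cont_r : forall (X Y : Type) (mu : T cm X) (c : nat -> X -> T cm Y) (g : X -> T cm Y),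
      (forall k a, le Y (c k a) (c (S k) a)) ->
      (* g is the lub of the chain c in the pointwise order *)
      ((forall k a, le Y (c k a) (g a)) /\
       (forall u : X -> T cm Y, (forall k a, le Y (c k a) (u a)) -> forall a, le Y (g a) (u a))) ->
      is_lub (le Y) (fun k => bind mu (c k)) (bind mu g)
}.
Arguments le {c0 X} _ _.

From Stdlib Require Import FunctionalExtensionality.

Lemma bind_fmap (M : monad) (X Y Z : Type) (h : X -> Y) (mu : T M X) (f : Y -> T M Z) :
  bind (fmap h mu) f = bind mu (fun a => f (h a)).
Proof.
  unfold fmap. rewrite bind_assoc. f_equal.
  apply functional_extensionality. intro a.
  apply bind_ret_l.
Qed.

Lemma bind_comp_mono_fmap (M : continuous_monad) (A B X Y : Type)
    (mu : T M A) (nu : T M B) (x : A -> X) (y : B -> X) (f : X -> T M Y) :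
  le (fmap x mu) (fmap y nu) ->
  le (bind mu (fun i => f (x i))) (bind nu (fun j => f (y j))).
Proof.
  intro Hle. rewrite <- (bind_fmap M A X Y x mu f), <- (bind_fmap M B X Y y nu f).
  apply bind_mono_l. exact Hle.
Qed.

Theorem proposition5p15 (M : continuous_monad) (X Y : Type) (n m : natw)
    (Gamma : T M (idx n)) (Delta : T M (idx m))
    (x : idx n -> X) (y : idx m -> X) :
  (forall f : X -> T M Y,
      le (fmap x Gamma) (fmap y Delta) ->
      le (bind Gamma (fun i => f (x i))) (bind Delta (fun j => f (y j)))) /\
  (forall f g : X -> T M Y,
      (forall a, le (f a) (g a)) ->
      le (bind Gamma (fun i => f (x i))) (bind Gamma (fun i => g (x i)))).
Proof.
  split.
  - intros f. apply bind_comp_mono_fmap.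
  - intros f g Hfg. apply bind_mono_r. intro i. apply Hfg.
Qed.
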